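(* Let $\mathbb K$ be a field with $2\in\mathbb K^\times$, $A$ a unital commutative associative $\mathbb K$-algebra, $\mathfrak k$ a $\mathbb K$-Lie algebra and $\mathfrak g=A\otimes\mathfrak k$. The map $$\Phi:\mathrm{Alt}^2(\mathfrak g/\mathfrak g')_{1,3}\oplus\mathrm{Lin}(A,H^2(\mathfrak k))\to H^2(\mathfrak g),\quad(\omega,\phi)\mapsto[\omega\circ(q\times q)]+[f_\phi],$$ is a well-defined injective linear map, and its image consists of the classes of those 2-cocycles $f=f_1\circ p_1+f_2\circ p_2+f_3\circ p_3$ for which $f_1\circ p_1$ vanishes on $\mathfrak g\times\mathfrak g'$.
   Context: $\mathfrak g$ has bracket $[a\otimes x,a'\otimes x']=aa'\otimes[x,x']$, $ax=a\otimes x$, unit $\mathbf 1$; $\mathfrak k'=[\mathfrak k,\mathfrak k]$, $\mathfrak g'=A\otimes\mathfrak k'$, $\mathfrak g/\mathfrak g'\cong A\otimes(\mathfrak k/\mathfrak k')$, $q:\mathfrak g\to\mathfrak g/\mathfrak g'$ the quotient map. $H^2(\mathfrak g)$: $\mathbb K$-valued 2-cocycles on $\mathfrak g$ modulo coboundaries $(u,v)\mapsto-\ell([u,v])$; $Z^2(\mathfrak k),H^2(\mathfrak k)$ similarly for $\mathfrak k$. Alternating bilinear forms on $\mathfrak g$ are identified with linear forms on $\Lambda^2(\mathfrak g)$ via $f(u,v)=f(u\wedge v)$, where $v\wedge w=\tfrac12(v\otimes w-w\otimes v)$ and $v\vee w=\tfrac12(v\otimes w+w\otimes v)$. $I_A$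 is the kernel of multiplication $S^2(A)\to A$; $p_1(ax\wedge by)=a\wedge b\otimes x\vee y$, $p_2(ax\wedge by)=ab\otimes x\wedge y$, $p_3(ax\wedge by)=(a\vee b-ab\vee\mathbf 1)\otimes x\wedge y$ give an isomorphism $\Lambda^2(\mathfrak g)\cong(\Lambda^2(A)\otimes S^2(\mathfrak k))\oplus(A\otimes\Lambda^2(\mathfrak k))\oplus(I_A\otimes\Lambda^2(\mathfrak k))$, so each linear $f$ on $\Lambda^2(\mathfrak g)$ is uniquely $f_1\circ p_1+f_2\circ p_2+f_3\circ p_3$. $\mathrm{Alt}^2(\mathfrak g/\mathfrak g')_{1,3}$ is the space of alternating bilinear forms $\omega$ on $\mathfrak g/\mathfrak g'$ with $\omega(a\bar x,\mathbf 1\bar y)+\omega(\mathbf 1\bar x,a\bar y)=0$ for all $a\in A$, $\bar x,\bar y\in\mathfrak k/\mathfrak k'$. For $\phi\in\mathrm{Lin}(A,H^2(\mathfrak k))$, $f_\phi(ax,by):=\tilde\phi(ab)(x,y)$, where $\tilde\phi:A\to Z^2(\mathfrak k)$ is any linear lift of $\phi$. *)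

From HB Require Import structures.
From mathcomp Require Import all_boot all_order all_algebra.
Set Implicit Arguments. Unset Strict Implicit. Unset Printing Implicit Defensive.
Import GRing.Theory.
Local Open Scope ring_scope.

Section Defs.
Variable K : fieldType.

Definition is_lin (V W : lmodType K) (L : V -> W) : Prop :=
  forall (c : K) (u v : V), L (c *: u + v) = c *: L u + L v.

Definition is_bilin (V W U : lmodType K) (b : V -> W -> U) : Prop :=
  (forall v, is_lin (b v)) /\ (forall w, is_lin (fun v => b v w)).

Definition bilin_form (V : lmodType K) (f : V -> V -> K) : Prop :=
  (forall c u1 u2 v, f (c *: u1 + u2) v = c * f u1 v + f u2 v) /\
  (forall c u v1 v2, f u (c *: v1 + v2) = c * f u v1 + f u v2).

Definition alt_form (V : lmodType K) (f : V -> V -> K) : Prop :=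
  bilin_form f /\ (forall u, f u u = 0).

Definition is_lie_bracket (L : lmodType K) (br : L -> L -> L) : Prop :=
  is_bilin br /\ (forall x, br x x = 0) /\
  (forall x y z, br x (br y z) + br y (br z x) + br z (br x y) = 0).

Definition cocycle2 (L : lmodType K) (br : L -> L -> L) (f : L -> L -> K) : Prop :=
  alt_form f /\
  (forall x y z, f (br x y) z + f (br y z) x + f (br z x) y = 0).

Definition coboundary2 (L : lmodType K) (br : L -> L -> L) (f : L -> L -> K) : Prop :=
  exists l : L -> K, is_lin (W := K^o) l /\ forall u v, f u v = - l (br u v).

Definition inspan (V : lmodType K) (S : V -> Prop) (v : V) : Prop :=
  exists (n : nat) (c : 'I_n -> K) (s : 'I_n -> V),
    (forall i, S (s i)) /\ v = \sum_(i < n) c i *: s i.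

Definition is_tensor (A k g : lmodType K) (t : A -> k -> g) : Prop :=
  is_bilin t /\
  forall (V : lmodType K) (beta : A -> k -> V), is_bilin beta ->
    exists L : g -> V, is_lin L /\ (forall a x, L (t a x) = beta a x) /\
      forall L' : g -> V, is_lin L' -> (forall a x, L' (t a x) = beta a x) ->
        forall u, L' u = L u.

Definition derived (k : lmodType K) (br : k -> k -> k) : k -> Prop :=
  inspan (fun z => exists x y, z = br x y).

Definition gprime (A k g : lmodType K) (t : A -> k -> g) (br : k -> k -> k) : g -> Prop :=
  inspan (fun u => exists a y, derived br y /\ u = t a y).

Definition is_quotient_map (g Q : lmodType K) (q : g -> Q) (S : g -> Prop) : Prop :=
  is_lin q /\ (forall w, exists u, q u = w) /\ (forall u, q u = 0 <-> S u).

Definition alt13 (A : comAlgType K) (k g Q : lmodType K) (t : A -> k -> g)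
  (q : g -> Q) (om : Q -> Q -> K) : Prop :=
  alt_form om /\
  forall (a : A) (x y : k), om (q (t a x)) (q (t 1 y)) + om (q (t 1 x)) (q (t a y)) = 0.

(* phi : A -> Z^2(k), a linear lift of an element of Lin(A, H^2(k)) *)
Definition Z2_lift (A : comAlgType K) (k : lmodType K) (br : k -> k -> k)
  (phi : A -> k -> k -> K) : Prop :=
  (forall c a b x y, phi (c *: a + b) x y = c * phi a x y + phi b x y) /\
  (forall a, cocycle2 br (phi a)).

Definition is_fphi (A : comAlgType K) (k g : lmodType K) (t : A -> k -> g)
  (phi : A -> k -> k -> K) (h : g -> g -> K) : Prop :=
  bilin_form h /\ forall a x b y, h (t a x) (t b y) = phi (a * b) x y.

(* representative of Phi(om, [phi]) : om o (q x q) + f_phi *)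
Definition Phi_rep (g Q : lmodType K) (q : g -> Q) (om : Q -> Q -> K)
  (h : g -> g -> K) : g -> g -> K :=
  fun u v => om (q u) (q v) + h u v.

(* f1 o p1 vanishes on g x g' :  f = h1 + h2 with h1 the component in
   Lambda^2(A) (x) S^2(k) (antisymmetric in A, symmetric in k) and h2 the
   component in S^2(A) (x) Lambda^2(k) ~ (A (x) Lambda^2 k) + (I_A (x) Lambda^2 k),
   i.e. h1 = f1 o p1 and h2 = f2 o p2 + f3 o p3. *)
Definition f1p1_vanishes (A : comAlgType K) (k g : lmodType K) (t : A -> k -> g)
  (br : k -> k -> k) (f : g -> g -> K) : Prop :=
  exists h1 h2 : g -> g -> K,
    bilin_form h1 /\ bilin_form h2 /\ (forall u v, f u v = h1 u v + h2 u v) /\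
    (forall a b x y, h1 (t a x) (t b y) = - h1 (t b x) (t a y)) /\
    (forall a b x y, h1 (t a x) (t b y) = h1 (t a y) (t b x)) /\
    (forall a b x y, h2 (t a x) (t b y) = h2 (t b x) (t a y)) /\
    (forall a b x y, h2 (t a x) (t b y) = - h2 (t a y) (t b x)) /\
    (forall u v, gprime t br v -> h1 u v = 0).

End Defs.

From HB Require Import structures.
From mathcomp Require Import all_boot all_order all_algebra.
From mathcomp Require Import ring.
From mathcomp Require classical_sets.
From Stdlib Require Import ClassicalEpsilon Classical.
Set Implicit Arguments. Unset Strict Implicit. Unset Printing Implicit Defensive.
Import GRing.Theory.
Local Open Scope ring_scope.

(* Linear and bilinear maps on g = A (x) k are determined by their values on
   pure tensors, so every identity is checked on a x, b y.  Since [g, g] lies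
   in g', the summand om o (q x q) of Phi(om, phi) is a cocycle, and f_phi is
   one because phi(abc) is.  If Phi(om, phi) = -l([., .]), adding its values
   at (a x, 1 y) and (1 x, a y) the (1,3)-condition cancels om and leaves
   phi(a)(x, y) = -l(a [x, y]): so phi(a) is a coboundary, and then om = 0.
   For independence of the lift, primitives l_a of phi(a) - phi'(a) depend
   linearly on a on k' = [k, k]; composing with a projection onto a subspace
   where they do (Zorn) yields one primitive on g.  For the image, the part of
   om o (q x q) antisymmetric in A is the f1 o p1 component of Phi(om, phi).
   Conversely, if f1 o p1 kills g x g', the cocycle identity at (a x, b y, 1 z)
   forces f2(a x, b [y, z]) = f2(ab x, 1 [y, z]); hence
   psi(a)(x, y) := f2(a x, 1 y) lifts a cocycle and f - f_psi vanishes on g'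
   in both arguments, i.e. it descends to some om in Alt^2(g/g')_{1,3}. *)

Section LinearMaps.
Variable K : fieldType.
Implicit Types V W : lmodType K.

Lemma lin0 V W (L : V -> W) : is_lin L -> L 0 = 0.
Proof.
move=> HL; apply: (addIr (L 0)); rewrite add0r.
by have := HL 1 0 0; rewrite scaler0 addr0 scale1r => /esym.
Qed.

Lemma linD V W (L : V -> W) : is_lin L -> forall u v, L (u + v) = L u + L v.
Proof. by move=> HL u v; have := HL 1 u v; rewrite !scale1r. Qed.

Lemma linZ V W (L : V -> W) : is_lin L -> forall c u, L (c *: u) = c *: L u.
Proof. by move=> HL c u; have := HL c u 0; rewrite !addr0 (lin0 HL) addr0. Qed.

Lemma linN V W (L : V -> W) : is_lin L -> forall u, L (- u) = - L u.
Proof. by move=> HL u; rewrite -scaleN1r (linZ HL) scaleN1r. Qed.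

Lemma linB V W (L : V -> W) : is_lin L -> forall u v, L (u - v) = L u - L v.
Proof. by move=> HL u v; rewrite (linD HL) (linN HL). Qed.

Lemma lin_sum V W (L : V -> W) : is_lin L ->
  forall n (F : 'I_n -> V), L (\sum_(i < n) F i) = \sum_(i < n) L (F i).
Proof. by move=> HL n F; apply: (big_morph L (linD HL) (lin0 HL)). Qed.

Lemma lin_comp V W (U : lmodType K) (L1 : V -> W) (L2 : W -> U) :
  is_lin L1 -> is_lin L2 -> is_lin (fun v => L2 (L1 v)).
Proof. by move=> H1 H2 c u v; rewrite H1 H2. Qed.

Lemma lin_zero V W : is_lin (fun _ : V => 0 : W).
Proof. by move=> c u v; rewrite scaler0 addr0. Qed.

Lemma lin_comb V W (L1 L2 : V -> W) (c : K) :
  is_lin L1 -> is_lin L2 -> is_lin (fun v => c *: L1 v + L2 v).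
Proof.
move=> H1 H2 d u v; rewrite H1 H2 scalerDr !scalerA mulrC -!scalerA.
by rewrite addrACA -scalerDr.
Qed.

Lemma inspan_mem V (S : V -> Prop) v : S v -> inspan S v.
Proof.
move=> Sv; exists 1%N, (fun _ => 1), (fun _ => v); split=> //.
by rewrite big_ord1 scale1r.
Qed.

Lemma inspan_lin_ext V W (S : V -> Prop) (L1 L2 : V -> W) :
  is_lin L1 -> is_lin L2 -> (forall s, S s -> L1 s = L2 s) ->
  forall v, inspan S v -> L1 v = L2 v.
Proof.
move=> H1 H2 E v [n [c [s [Ss ->]]]].
rewrite (lin_sum H1) (lin_sum H2); apply: eq_bigr => i _.
by rewrite (linZ H1) (linZ H2) E.
Qed.

Lemma double_inj (x y : K) : 2%:R != 0 :> K -> x + x = y + y -> x = y.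
Proof. by move=> two_neq0 E; apply: (mulIf two_neq0); rewrite !mulr_natr !mulr2n. Qed.

Lemma lin_scalarE V (L : V -> K) :
  is_lin (W := K^o) L -> forall c u v, L (c *: u + v) = c * L u + L v.
Proof. by []. Qed.

Lemma cyclic_sum_eq (X : Type) (T T' : X -> X -> X -> K) : 2%:R != 0 :> K ->
  (forall x y z, T' x y z + T' y z x + T' z x y = 0) ->
  (forall x y z, T' x y z + T y z x + T z x y = 0) ->
  forall x y z, T x y z = T' x y z.
Proof.
move=> two_neq0 T'_cycle TT'_cycle x y z.
have T_cycle : T x y z + T y z x + T z x y = 0.
  apply: double_inj => //; rewrite addr0.
  transitivity ((T' x y z + T y z x + T z x y) + (T' y z x + T z x y + T x y z)
    + (T' z x y + T x y z + T y z x) - (T' x y z + T' y z x + T' z x y)); first ring.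
  by rewrite !TT'_cycle T'_cycle oppr0 !addr0.
apply/eqP; rewrite -subr_eq0; apply/eqP.
transitivity ((T x y z + T y z x + T z x y) - (T' x y z + T y z x + T z x y)); first ring.
by rewrite T_cycle TT'_cycle subrr.
Qed.

End LinearMaps.

Section BilinearForms.
Variable K : fieldType.
Implicit Types V W Q : lmodType K.

Section Form.
Variables (V : lmodType K) (f : V -> V -> K).
Hypothesis f_bilin : bilin_form f.

Lemma form_linl v : is_lin (W := K^o) (fun u => f u v).
Proof. by move=> c u1 u2; apply: f_bilin.1. Qed.

Lemma form_linr u : is_lin (W := K^o) (f u).
Proof. by move=> c v1 v2; apply: f_bilin.2. Qed.

Lemma formDl u1 u2 v : f (u1 + u2) v = f u1 v + f u2 v.
Proof. exact: (linD (form_linl v)). Qed.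

Lemma formDr u v1 v2 : f u (v1 + v2) = f u v1 + f u v2.
Proof. exact: (linD (form_linr u)). Qed.

Lemma formZl c u v : f (c *: u) v = c * f u v.
Proof. exact: (linZ (form_linl v)). Qed.

Lemma formZr c u v : f u (c *: v) = c * f u v.
Proof. exact: (linZ (form_linr u)). Qed.

Lemma form0l v : f 0 v = 0.
Proof. exact: (lin0 (form_linl v)). Qed.

Lemma form0r u : f u 0 = 0.
Proof. exact: (lin0 (form_linr u)). Qed.

Lemma formBl u1 u2 v : f (u1 - u2) v = f u1 v - f u2 v.
Proof. exact: (linB (form_linl v)). Qed.

End Form.

Lemma bilin_form_comp V W (f : V -> V -> K) (L : W -> V) :
  bilin_form f -> is_lin L -> bilin_form (fun u v => f (L u) (L v)).
Proof. by move=> [H1 H2] HL; split=> c u1 u2 v; rewrite HL ?H1 ?H2. Qed.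

Lemma alt_form_skew V (f : V -> V -> K) : alt_form f -> forall u v, f u v = - f v u.
Proof.
case=> f_bilin f_alt u v; have := f_alt (u + v).
rewrite (formDl f_bilin) !(formDr f_bilin) !f_alt add0r addr0 => /eqP.
by rewrite addr_eq0 => /eqP.
Qed.

Lemma skew_form_alt V (f : V -> V -> K) : 2%:R != 0 :> K ->
  (forall u v, f u v = - f v u) -> forall u, f u u = 0.
Proof. by move=> two_neq0 f_skew u; apply: double_inj => //; rewrite {1}f_skew addNr addr0. Qed.

Lemma quotient_form_factor V Q (q : V -> Q) (S : V -> Prop) (G : V -> V -> K) :
  is_quotient_map q S -> bilin_form G ->
  (forall u v, S u -> G u v = 0) -> (forall u v, S v -> G u v = 0) ->
  exists om : Q -> Q -> K, bilin_form om /\ forall u v, om (q u) (q v) = G u v.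
Proof.
move=> [q_lin [q_onto q_ker]] G_bilin GS1 GS2.
have [s sK] := choice _ q_onto.
have in_ker u1 u2 : q u1 = q u2 -> S (u1 - u2).
  by move=> E; apply/q_ker; rewrite (linB q_lin) E subrr.
have Gq1 u1 u2 v : q u1 = q u2 -> G u1 v = G u2 v.
  by move=> /in_ker/GS1 E; apply/eqP; rewrite -subr_eq0 -(formBl G_bilin) E.
have Gq2 u v1 v2 : q v1 = q v2 -> G u v1 = G u v2.
  move=> /in_ker/(GS2 u) E; apply/eqP; rewrite -subr_eq0.
  by rewrite -(linB (form_linr G_bilin u)) E.
exists (fun w z => G (s w) (s z)); split; last first.
  by move=> u v; rewrite (Gq1 _ u) ?sK // (Gq2 _ _ v) ?sK.
split=> c w1 w2 w3.
  by rewrite (Gq1 _ (c *: s w1 + s w2)) ?G_bilin.1 // q_lin !sK.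
by rewrite (Gq2 _ _ (c *: s w2 + s w3)) ?G_bilin.2 // q_lin !sK.
Qed.

End BilinearForms.

Section Complement.
Variables (K : fieldType) (V : lmodType K).

Definition lin_closed (S : V -> Prop) := forall c u v, S u -> S v -> S (c *: u + v).

Lemma lin_closed_sub (S : V -> Prop) : lin_closed S -> forall u v, S u -> S v -> S (u - v).
Proof. by move=> S_closed u v Su Sv; rewrite addrC -scaleN1r; apply: S_closed. Qed.

Lemma lin_closed_add0 (C : V -> Prop) : lin_closed C -> lin_closed (fun x => C x \/ x = 0).
Proof.
move=> C_closed c u v [Cu|->] [Cv|->]; rewrite ?scaler0 ?add0r ?addr0; [left..|by right].
- exact: C_closed.
- rewrite -[c *: u]addr0 -(subrr u).
  exact: C_closed _ _ _ Cu (lin_closed_sub C_closed Cu Cu).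
- exact: Cv.
Qed.

Lemma subspace_complement (S : V -> Prop) : S 0 -> lin_closed S ->
  exists C : V -> Prop, [/\ lin_closed C, C 0, (forall x, C x -> S x -> x = 0)
    & forall v, exists s, S s /\ C (v - s)].
Proof.
move=> S0 S_closed.
pose P (C : V -> Prop) := lin_closed C /\ forall x, C x -> S x -> x = 0.
have [C [[C_closed CS] C_max]] :
    exists C, P C /\ forall B, classical_sets.proper C B -> ~ P B.
  apply: classical_sets.Zorn_bigcup => F FP F_total; split.
    move=> c u v [X FX Xu] [Y FY Yv].
    have [XY|YX] := F_total X Y FX FY.
      by exists Y => //; apply: (FP Y FY).1 => //; apply: XY.
    by exists X => //; apply: (FP X FX).1 => //; apply: YX.
  by move=> x [X FX Xx] Sx; apply: (FP X FX).2.
have C_maximal (B : V -> Prop) : P B -> (forall x, C x -> B x) -> forall x, B x -> C x.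
  move=> PB CB x Bx; apply: NNPP => Cx.
  by apply: (C_max B) => //; split=> // BC; apply/Cx/BC.
(* The empty set satisfies [P], so [C 0] is a consequence of maximality. *)
have C0 : C 0.
  apply: (C_maximal (fun x => C x \/ x = 0)); [split|by left|by right].
    exact: lin_closed_add0.
  by move=> x [/CS|->].
exists C; split=> // v; apply: NNPP => v_out.
pose Cv x := exists a c, C c /\ x = c + a *: v.
have Cv_v : C v.
  apply: (C_maximal Cv); [split| |].
  - move=> c x y [a1 [c1 [Cc1 ->]]] [a2 [c2 [Cc2 ->]]].
    exists (c * a1 + a2), (c *: c1 + c2); split; first exact: C_closed.
    by rewrite scalerDr scalerDl scalerA addrACA.
  - move=> x [a [c [Cc ->]]] Sx; have [a0|a_neq0] := eqVneq a 0.
      by move: Sx; rewrite a0 scale0r addr0; apply: CS.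
    exfalso; apply: v_out; exists (a^-1 *: (c + a *: v)); split.
      by rewrite -[_ *: _]addr0; apply: S_closed.
    rewrite scalerDr scalerA mulVf // scale1r opprD addrCA subrr addr0 -scaleNr.
    by rewrite -[(- a^-1) *: c]addr0; apply: C_closed.
  - by move=> x Cx; exists 0, x; rewrite scale0r addr0.
  - by exists 1, 0; rewrite scale1r add0r.
by apply: v_out; exists 0; rewrite subr0.
Qed.

Lemma subspace_projection (S : V -> Prop) : S 0 -> lin_closed S ->
  exists pi : V -> V, [/\ is_lin pi, forall v, S (pi v) & forall s, S s -> pi s = s].
Proof.
move=> S0 S_closed.
have [C [C_closed C0 CS decomp]] := subspace_complement S0 S_closed.
have proj_unique v s1 s2 : S s1 -> C (v - s1) -> S s2 -> C (v - s2) -> s1 = s2.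
  move=> Ss1 Cs1 Ss2 Cs2; apply/eqP; rewrite -subr_eq0; apply/eqP/CS.
    have -> : s1 - s2 = (v - s2) - (v - s1) by rewrite opprB [RHS]addrC addrA subrK.
    exact: lin_closed_sub.
  exact: lin_closed_sub.
have [pi piP] := choice _ decomp.
exists pi; split=> [c u v|v|s Ss].
- have [Su Cu] := piP u; have [Sv Cv] := piP v; have [Suv Cuv] := piP (c *: u + v).
  apply: (proj_unique (c *: u + v)) => //; first exact: S_closed.
  by rewrite opprD addrACA -scalerBr; apply: C_closed.
- by case: (piP v).
- by have [Sps Cps] := piP s; apply: (proj_unique s); rewrite ?subrr.
Qed.

End Complement.

Section TensorProduct.
Variables (K : fieldType) (A k g : lmodType K) (t : A -> k -> g).
Hypothesis t_tensor : is_tensor t.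

Lemma tensor_linl x : is_lin (fun a => t a x).
Proof. exact: t_tensor.1.2. Qed.

Lemma tensor_linr a : is_lin (t a).
Proof. exact: t_tensor.1.1. Qed.

Lemma tensor_lin_ext (V : lmodType K) (L1 L2 : g -> V) : is_lin L1 -> is_lin L2 ->
  (forall a x, L1 (t a x) = L2 (t a x)) -> forall u, L1 u = L2 u.
Proof.
move=> L1_lin L2_lin E u.
have [|L [_ [_ L_uniq]]] := t_tensor.2 V (fun a x => L1 (t a x)).
  by split=> [a|x]; apply: lin_comp L1_lin; [apply: tensor_linr|apply: tensor_linl].
by rewrite (L_uniq L1) // (L_uniq L2) // => a x; rewrite E.
Qed.

Lemma tensor_lift_family (P : Type) (V : lmodType K) (B : P -> A -> k -> V) :
  (forall p, is_bilin (B p)) ->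
  exists F : P -> g -> V, forall p, is_lin (F p) /\ forall a x, F p (t a x) = B p a x.
Proof.
move=> B_bilin.
have lift p : exists L : g -> V, is_lin L /\ forall a x, L (t a x) = B p a x.
  by have [L [L_lin [L_tensor _]]] := t_tensor.2 V (B p) (B_bilin p); exists L.
exact: choice lift.
Qed.

Lemma tensor_form_ext (f1 f2 : g -> g -> K) : bilin_form f1 -> bilin_form f2 ->
  (forall a x b y, f1 (t a x) (t b y) = f2 (t a x) (t b y)) -> forall u v, f1 u v = f2 u v.
Proof.
move=> f1_bilin f2_bilin E u v.
apply: (tensor_lin_ext (form_linl f1_bilin v) (form_linl f2_bilin v)) => a x.
by apply: (tensor_lin_ext (form_linr f1_bilin _) (form_linr f2_bilin _)) => b y.
Qed.

Lemma tensor_form_exists (B : A -> k -> A -> k -> K) :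
  (forall c a a' x b y, B (c *: a + a') x b y = c * B a x b y + B a' x b y) ->
  (forall c a x x' b y, B a (c *: x + x') b y = c * B a x b y + B a x' b y) ->
  (forall c a x b b' y, B a x (c *: b + b') y = c * B a x b y + B a x b' y) ->
  (forall c a x b y y', B a x b (c *: y + y') = c * B a x b y + B a x b y') ->
  exists h : g -> g -> K, bilin_form h /\ forall a x b y, h (t a x) (t b y) = B a x b y.
Proof.
move=> B_lin1 B_lin2 B_lin3 B_lin4.
have [|F F_spec] :=
    tensor_lift_family (V := K^o) (B := fun (p : A * k) a x => B a x p.1 p.2).
  by move=> [b y]; split=> [a|x] c u v /=; [apply: B_lin2|apply: B_lin1].
have F_lin p := (F_spec p).1; have F_tensor p := (F_spec p).2.
have F_linear (c : K) p1 p2 p :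
    (forall a x, B a x p.1 p.2 = c * B a x p1.1 p1.2 + B a x p2.1 p2.2) ->
    forall u, F p u = c * F p1 u + F p2 u.
  move=> E; apply: tensor_lin_ext (F_lin p) (lin_comb c (F_lin p1) (F_lin p2)) _ => a x.
  by rewrite /= !F_tensor E.
have [|G G_spec] := tensor_lift_family (V := K^o) (B := fun u b y => F (b, y) u).
  move=> u; split=> [b|y] c v w /=; apply: F_linear => a x /=; [exact: B_lin4|exact: B_lin3].
have G_lin u := (G_spec u).1; have G_tensor u := (G_spec u).2.
exists G; split; last by move=> a x b y; rewrite G_tensor F_tensor.
split=> [c u1 u2 v|c u v1 v2]; last exact: G_lin.
apply: tensor_lin_ext (G_lin _) (lin_comb c (G_lin u1) (G_lin u2)) _ v => b y.
by rewrite /= !G_tensor (F_lin (b, y)).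
Qed.

End TensorProduct.

Section CurrentAlgebra.
Variables (K : fieldType) (A : comAlgType K) (k : lmodType K) (brk : k -> k -> k).
Variables (g : lmodType K) (t : A -> k -> g) (brg : g -> g -> g).
Variables (Q : lmodType K) (q : g -> Q).
Implicit Types (phi : A -> k -> k -> K) (h f : g -> g -> K) (om : Q -> Q -> K).
Hypothesis two_neq0 : 2%:R != 0 :> K.
Hypothesis t_tensor : is_tensor t.
Hypothesis brg_bilin : is_bilin brg.
Hypothesis brg_tensor : forall a x b y, brg (t a x) (t b y) = t (a * b) (brk x y).
Hypothesis q_quotient : is_quotient_map q (gprime t brk).

Lemma derived_bracket x y : derived brk (brk x y).
Proof. by apply: inspan_mem; exists x, y. Qed.

Lemma gprime_tensor a y : derived brk y -> gprime t brk (t a y).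
Proof. by move=> Dy; apply: inspan_mem; exists a, y. Qed.

Lemma q_tensor_derived a y : derived brk y -> q (t a y) = 0.
Proof. by move=> Dy; apply/(q_quotient.2.2 _)/gprime_tensor. Qed.

Lemma q_bracket u v : q (brg u v) = 0.
Proof.
have q_lin := q_quotient.1.
have q_bracket_tensor a x w : q (brg (t a x) w) = 0.
  apply: (tensor_lin_ext t_tensor (L1 := fun w => q (brg (t a x) w)) (L2 := fun _ => 0)) w.
  - exact: lin_comp (brg_bilin.1 _) q_lin.
  - exact: lin_zero.
  - by move=> b y; rewrite brg_tensor q_tensor_derived //; apply: derived_bracket.
apply: (tensor_lin_ext t_tensor (L1 := fun u => q (brg u v)) (L2 := fun _ => 0)) u.
- exact: lin_comp (brg_bilin.2 _) q_lin.
- exact: lin_zero.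
- by move=> a x; apply: q_bracket_tensor.
Qed.

Lemma form_gprimer (f : g -> g -> K) : bilin_form f ->
  (forall u a y, derived brk y -> f u (t a y) = 0) ->
  forall u v, gprime t brk v -> f u v = 0.
Proof.
move=> f_bilin f_tensor u.
apply: (inspan_lin_ext (form_linr f_bilin u) (lin_zero (V := g) K^o)).
by move=> _ [a [y [Dy ->]]]; apply: f_tensor.
Qed.

Lemma cocycle_identity_tensor (f : g -> g -> K) : bilin_form f ->
  (forall a x b y c z, f (brg (t a x) (t b y)) (t c z) + f (brg (t b y) (t c z)) (t a x)
      + f (brg (t c z) (t a x)) (t b y) = 0) ->
  forall u v w, f (brg u v) w + f (brg v w) u + f (brg w u) v = 0.
Proof.
move=> f_bilin f_tensor.
pose T u v w := f (brg u v) w + f (brg v w) u + f (brg w u) v.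
have T_cycle u v w : T u v w = T v w u by rewrite /T; ring.
have T_lin u v : is_lin (W := K^o) (T u v).
  move=> c w1 w2; rewrite /T (brg_bilin.1 v) [brg (_ + _) u](brg_bilin.2 u).
  rewrite !(formDl f_bilin) (formDr f_bilin) !(formZl f_bilin) (formZr f_bilin).
  by rewrite -[c *: _]/(c * _); ring.
have T_tensor2 a x b y w : T (t a x) (t b y) w = 0.
  apply: (tensor_lin_ext t_tensor (T_lin _ _) (lin_zero (V := g) K^o)) => c z.
  exact: f_tensor.
have T_tensor1 a x v w : T (t a x) v w = 0.
  rewrite T_cycle T_cycle.
  apply: (tensor_lin_ext t_tensor (T_lin _ _) (lin_zero (V := g) K^o)) v => b y /=.
  by rewrite T_cycle T_tensor2.
move=> u v w; rewrite -/(T u v w) T_cycle.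
apply: (tensor_lin_ext t_tensor (T_lin _ _) (lin_zero (V := g) K^o)) u => a x /=.
by rewrite -T_cycle T_tensor1.
Qed.

Lemma Z2_lift_skew phi : Z2_lift brk phi -> forall a x y, phi a x y = - phi a y x.
Proof. by move=> phi_Z2 a; apply: alt_form_skew; exact: (phi_Z2.2 a).1. Qed.

Lemma fphi_skew phi h : Z2_lift brk phi -> is_fphi t phi h -> forall u v, h u v = - h v u.
Proof.
move=> phi_Z2 [h_bilin h_tensor].
apply: (tensor_form_ext t_tensor h_bilin).
  by split=> c u1 u2 v; rewrite ?h_bilin.1 ?h_bilin.2; ring.
by move=> a x b y; rewrite !h_tensor mulrC (Z2_lift_skew phi_Z2 (b * a) y) opprK.
Qed.

Lemma fphi_exists phi : Z2_lift brk phi -> exists h, is_fphi t phi h.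
Proof.
move=> phi_Z2; have phi_bilin a := (phi_Z2.2 a).1.1.
have [||||h h_spec] := tensor_form_exists t_tensor (B := fun a x b y => phi (a * b) x y);
  last by exists h.
- by move=> c a a' x b y; rewrite mulrDl -scalerAl; apply: phi_Z2.1.
- by move=> c a x x' b y; apply: (phi_bilin _).1.
- by move=> c a x b b' y; rewrite mulrDr -scalerAr; apply: phi_Z2.1.
- by move=> c a x b y y'; apply: (phi_bilin _).2.
Qed.

Lemma Phi_rep_bilin om h : alt_form om -> bilin_form h -> bilin_form (Phi_rep q om h).
Proof.
move=> [[om_lin1 om_lin2] _] [h_lin1 h_lin2].
by split=> c u1 u2 v; rewrite /Phi_rep q_quotient.1 ?om_lin1 ?h_lin1 ?om_lin2 ?h_lin2; ring.
Qed.

Lemma Phi_rep_cocycle om phi h : alt13 t q om -> Z2_lift brk phi -> is_fphi t phi h ->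
  cocycle2 brg (Phi_rep q om h).
Proof.
move=> [om_alt _] phi_Z2 [h_bilin h_tensor]; split; first split.
- exact: Phi_rep_bilin.
- move=> u; rewrite /Phi_rep om_alt.2 add0r.
  exact: skew_form_alt two_neq0 (fphi_skew phi_Z2 (conj h_bilin h_tensor)) u.
move=> u v w; rewrite /Phi_rep !q_bracket !(form0l om_alt.1) !add0r.
apply: (cocycle_identity_tensor h_bilin) => a x b y c z; rewrite !brg_tensor !h_tensor.
have -> : b * c * a = a * b * c by rewrite mulrC mulrA.
have -> : c * a * b = a * b * c by rewrite -mulrA mulrC.
exact: (phi_Z2.2 _).2.
Qed.

Lemma coboundary_family_linear (d : A -> k -> k -> K) :
  (forall c a b x y, d (c *: a + b) x y = c * d a x y + d b x y) ->
  (forall a, coboundary2 brk (d a)) ->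
  exists l : A -> k -> K^o, is_bilin l /\ forall a x y, d a x y = - l a (brk x y).
Proof.
move=> d_lin d_cob; have [l0 l0_spec] := choice _ d_cob.
have l0_lin a := (l0_spec a).1.
(* [l0 a] is linear in [a] on [k, k] but maybe nowhere else; compose it with a
   projection onto a subspace where it is. *)
pose S w := forall c a b, l0 (c *: a + b) w = c * l0 a w + l0 b w.
have [||pi [pi_lin pi_S pi_id]] := subspace_projection (S := S).
- by move=> c a b; rewrite !(lin0 (l0_lin _)) mulr0 addr0.
- by move=> e u v Su Sv c a b; rewrite !(lin_scalarE (l0_lin _)) Su Sv; ring.
have S_bracket x y : S (brk x y).
  have l0_bracket a : l0 a (brk x y) = - d a x y by rewrite (l0_spec a).2 opprK.
  by move=> c a b; rewrite !l0_bracket d_lin; ring.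
exists (fun a w => l0 a (pi w)); split.
  by split=> [a|w]; [exact: lin_comp pi_lin (l0_lin a)|exact: pi_S].
by move=> a x y; rewrite pi_id; [exact: (l0_spec a).2|exact: S_bracket].
Qed.

Lemma fphi_lift_coboundary phi phi' h h' : Z2_lift brk phi -> Z2_lift brk phi' ->
  (forall a, coboundary2 brk (fun x y => phi a x y - phi' a x y)) ->
  is_fphi t phi h -> is_fphi t phi' h' -> coboundary2 brg (fun u v => h u v - h' u v).
Proof.
move=> phi_Z2 phi'_Z2 d_cob [h_bilin h_tensor] [h'_bilin h'_tensor].
have [|l [l_bilin l_cob]] := coboundary_family_linear _ d_cob.
  by move=> c a b x y; rewrite phi_Z2.1 phi'_Z2.1; ring.
have [L [L_lin [L_tensor _]]] := t_tensor.2 K^o l l_bilin.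
exists L; split=> // u v.
apply: (tensor_form_ext t_tensor (f1 := fun u v => h u v - h' u v)
  (f2 := fun u v => - L (brg u v))) => [||a x b y].
- by split=> c u1 u2 w; rewrite ?h_bilin.1 ?h'_bilin.1 ?h_bilin.2 ?h'_bilin.2; ring.
- split=> c u1 u2 w.
    by rewrite [brg (_ + _) w](brg_bilin.2 w) (lin_scalarE L_lin); ring.
  by rewrite (brg_bilin.1 u1) (lin_scalarE L_lin); ring.
- by rewrite h_tensor h'_tensor brg_tensor L_tensor l_cob.
Qed.

Lemma Phi_rep_linear (c : K) om1 om2 phi1 phi2 h1 h2 h :
  is_fphi t phi1 h1 -> is_fphi t phi2 h2 ->
  is_fphi t (fun a x y => c * phi1 a x y + phi2 a x y) h ->
  forall u v, Phi_rep q (fun w z => c * om1 w z + om2 w z) h u v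
              = c * Phi_rep q om1 h1 u v + Phi_rep q om2 h2 u v.
Proof.
move=> [h1_bilin h1_tensor] [h2_bilin h2_tensor] [h_bilin h_tensor] u v; rewrite /Phi_rep.
have -> : h u v = c * h1 u v + h2 u v.
  apply: (tensor_form_ext t_tensor (f2 := fun u v => c * h1 u v + h2 u v)) => //.
    by split=> e u1 u2 w; rewrite ?h1_bilin.1 ?h2_bilin.1 ?h1_bilin.2 ?h2_bilin.2; ring.
  by move=> a x b y; rewrite h_tensor h1_tensor h2_tensor.
ring.
Qed.

Lemma Phi_rep_injective om phi h : alt13 t q om -> Z2_lift brk phi -> is_fphi t phi h ->
  coboundary2 brg (Phi_rep q om h) ->
  (forall w z, om w z = 0) /\ (forall a, coboundary2 brk (phi a)).
Proof.
move=> [om_alt om13] phi_Z2 [h_bilin h_tensor] [l [l_lin l_cob]].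
have l_tensor a x b y :
    om (q (t a x)) (q (t b y)) + phi (a * b) x y = - l (t (a * b) (brk x y)).
  by rewrite -brg_tensor -l_cob /Phi_rep h_tensor.
(* the (1,3)-condition cancels the [om]-terms of [l_tensor] at (a x, 1 y) and (1 x, a y) *)
have phiE a x y : phi a x y = - l (t a (brk x y)).
  have := l_tensor a x 1 y; have := l_tensor 1 x a y; rewrite mulr1 mul1r => E1 E2.
  apply: double_inj => //.
  transitivity ((om (q (t 1 x)) (q (t a y)) + phi a x y)
    + (om (q (t a x)) (q (t 1 y)) + phi a x y)
    - (om (q (t a x)) (q (t 1 y)) + om (q (t 1 x)) (q (t a y)))); first ring.
  by rewrite E1 E2 om13 subr0.
split=> [w z|a].
  have [[u <-] [v <-]] := (q_quotient.2.1 w, q_quotient.2.1 z).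
  apply: (tensor_form_ext t_tensor (f1 := fun u v => om (q u) (q v)) (f2 := fun _ _ => 0)).
  - exact: bilin_form_comp om_alt.1 q_quotient.1.
  - by split=> *; rewrite mulr0 addr0.
  - by move=> a x b y; apply: (addIr (phi (a * b) x y)); rewrite l_tensor phiE add0r.
exists (fun z => l (t a z)); split; first exact: lin_comp (tensor_linr t_tensor a) l_lin.
by move=> x y; rewrite phiE.
Qed.

Lemma Phi_rep_f1p1_vanishes om phi h : alt13 t q om -> Z2_lift brk phi -> is_fphi t phi h ->
  f1p1_vanishes t brk (Phi_rep q om h).
Proof.
move=> [om_alt _] phi_Z2 [h_bilin h_tensor].
have [[om_lin1 om_lin2] _] := om_alt; have q_lin := q_quotient.1.
pose F a x b y := om (q (t a x)) (q (t b y)).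
have F_skew a x b y : F a y b x = - F b x a y by rewrite /F (alt_form_skew om_alt).
have PhiE a x b y : Phi_rep q om h (t a x) (t b y) = F a x b y + phi (a * b) x y.
  by rewrite /Phi_rep h_tensor.
(* [h1] is the [A]-antisymmetric part of [om o (q x q)], i.e. [f1 o p1]. *)
have [||||h1 [h1_bilin h1_tensor]] := tensor_form_exists t_tensor
    (B := fun a x b y => 2%:R^-1 * (F a x b y - F b x a y)).
- by move=> *; rewrite /F !(tensor_linl t_tensor) !q_lin ?om_lin1 ?om_lin2; ring.
- by move=> *; rewrite /F !(tensor_linr t_tensor) !q_lin ?om_lin1 ?om_lin2; ring.
- by move=> *; rewrite /F !(tensor_linl t_tensor) !q_lin ?om_lin1 ?om_lin2; ring.
- by move=> *; rewrite /F !(tensor_linr t_tensor) !q_lin ?om_lin1 ?om_lin2; ring.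
have Phi_bilin := Phi_rep_bilin om_alt h_bilin.
exists h1, (fun u v => Phi_rep q om h u v - h1 u v).
split; first exact: h1_bilin.
split.
  by split=> c u1 u2 v; rewrite ?Phi_bilin.1 ?Phi_bilin.2 ?h1_bilin.1 ?h1_bilin.2; ring.
split; first by move=> u v; ring.
split; first by move=> a b x y; rewrite !h1_tensor; ring.
split; first by move=> a b x y; rewrite !h1_tensor (F_skew a x b y) (F_skew b x a y); ring.
split; first by move=> a b x y; rewrite !PhiE !h1_tensor [b * a]mulrC; field.
split.
  move=> a b x y; rewrite !PhiE !h1_tensor (F_skew a x b y) (F_skew b x a y).
  by rewrite (Z2_lift_skew phi_Z2 _ y x); field.
apply: form_gprimer => // u b y Dy.
apply: (tensor_lin_ext t_tensor (form_linl h1_bilin (t b y)) (lin_zero (V := g) K^o)).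
move=> a x.
by rewrite h1_tensor /F !(q_tensor_derived _ Dy) !(form0r om_alt.1) subrr mulr0.
Qed.

Section SplitCocycle.
Variables (f h1 h2 : g -> g -> K).
Hypothesis f_cocycle : cocycle2 brg f.
Hypotheses (h1_bilin : bilin_form h1) (h2_bilin : bilin_form h2).
Hypothesis f_split : forall u v, f u v = h1 u v + h2 u v.
Hypothesis h1_antiA : forall a b x y, h1 (t a x) (t b y) = - h1 (t b x) (t a y).
Hypothesis h1_symk : forall a b x y, h1 (t a x) (t b y) = h1 (t a y) (t b x).
Hypothesis h2_symA : forall a b x y, h2 (t a x) (t b y) = h2 (t b x) (t a y).
Hypothesis h2_antik : forall a b x y, h2 (t a x) (t b y) = - h2 (t a y) (t b x).
Hypothesis h1_gprime : forall u v, gprime t brk v -> h1 u v = 0.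

Let psi a x y := h2 (t a x) (t 1 y).

Lemma h1_skew u v : h1 u v = - h1 v u.
Proof.
apply: (tensor_form_ext t_tensor h1_bilin (f2 := fun u v => - h1 v u)) => [|a x b y].
  by split=> c u1 u2 w; rewrite ?h1_bilin.1 ?h1_bilin.2; ring.
by rewrite h1_antiA h1_symk.
Qed.

Lemma h1_bracketl c x y w : h1 (t c (brk x y)) w = 0.
Proof. by rewrite h1_skew h1_gprime ?oppr0 //; apply/gprime_tensor/derived_bracket. Qed.

Lemma h2_cocycle_tensor a b x y z :
  h2 (t (a * b) (brk x y)) (t 1 z) + h2 (t a (brk y z)) (t b x)
    + h2 (t a (brk z x)) (t b y) = 0.
Proof.
have := f_cocycle.2 (t a x) (t b y) (t 1 z).
by rewrite !brg_tensor mulr1 mul1r !f_split !h1_bracketl !add0r (h2_symA b a).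
Qed.

Lemma h2_bracketr a b x y z : h2 (t a x) (t b (brk y z)) = psi (a * b) x (brk y z).
Proof.
rewrite /psi h2_antik [RHS]h2_antik; congr (- _).
apply: (cyclic_sum_eq (T := fun u v w => h2 (t a (brk u v)) (t b w))
  (T' := fun u v w => h2 (t (a * b) (brk u v)) (t 1 w)) two_neq0) => u v w /=.
  by have := h2_cocycle_tensor (a * b) 1 u v w; rewrite mulr1.
exact: h2_cocycle_tensor.
Qed.

Lemma psi_Z2_lift : Z2_lift brk psi.
Proof.
split=> [c a b x y|a]; first by rewrite /psi (tensor_linl t_tensor) h2_bilin.1.
split; first split.
- by split=> c x1 x2 y; rewrite /psi (tensor_linr t_tensor) ?h2_bilin.1 ?h2_bilin.2.
- by apply: (skew_form_alt two_neq0) => x y; apply: h2_antik.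
- by move=> x y z; have := h2_cocycle_tensor a 1 x y z; rewrite mulr1.
Qed.

Lemma split_cocycle_Phi_rep : exists om phi h,
  [/\ alt13 t q om, Z2_lift brk phi, is_fphi t phi h
     & forall u v, f u v = Phi_rep q om h u v].
Proof.
have [h h_fphi] := fphi_exists psi_Z2_lift; have [h_bilin h_tensor] := h_fphi.
pose G u v := f u v - h u v.
have G_bilin : bilin_form G.
  have [[f_lin1 f_lin2] _] := f_cocycle.1.
  by split=> c u1 u2 v; rewrite /G ?f_lin1 ?f_lin2 ?h_bilin.1 ?h_bilin.2; ring.
have G_skew u v : G u v = - G v u.
  by rewrite /G (alt_form_skew f_cocycle.1 u v) (fphi_skew psi_Z2_lift h_fphi u v); ring.
have G_gprimer u v : gprime t brk v -> G u v = 0.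
  apply: (form_gprimer G_bilin) => {u v} u b w Dw.
  apply: (tensor_lin_ext t_tensor (form_linl G_bilin (t b w)) (lin_zero (V := g) K^o)) u.
  move=> a x.
  rewrite /G f_split h1_gprime ?add0r; last exact: gprime_tensor.
  rewrite h_tensor; apply/eqP; rewrite subr_eq0; apply/eqP.
  apply: (inspan_lin_ext (W := K^o) (L1 := fun w => h2 (t a x) (t b w))
    (L2 := psi (a * b) x) _ _ _ Dw).
  - exact: lin_comp (tensor_linr t_tensor b) (form_linr h2_bilin _).
  - exact: lin_comp (tensor_linr t_tensor 1) (form_linr h2_bilin _).
  - by move=> _ [y [z ->]]; apply: h2_bracketr.
have G_gprimel u v : gprime t brk u -> G u v = 0.
  by move=> u_gprime; rewrite G_skew G_gprimer ?oppr0.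
have [om [om_bilin om_q]] := quotient_form_factor q_quotient G_bilin G_gprimel G_gprimer.
have om_alt : alt_form om.
  split=> // w; have [u <-] := q_quotient.2.1 w.
  by rewrite om_q; apply: skew_form_alt two_neq0 G_skew u.
exists om, psi, h; split=> //; last by move=> u v; rewrite /Phi_rep om_q /G subrK.
- split=> // a x y; rewrite !om_q /G !f_split !h_tensor mulr1 mul1r.
  by rewrite (h1_antiA 1 a x y) (h2_symA 1 a x y) /psi; ring.
- exact: psi_Z2_lift.
Qed.

End SplitCocycle.

Lemma f1p1_vanishes_Phi_rep f : cocycle2 brg f -> f1p1_vanishes t brk f ->
  exists om phi h, [/\ alt13 t q om, Z2_lift brk phi, is_fphi t phi h
                      & forall u v, f u v = Phi_rep q om h u v].
Proof.
move=> f_cocycle [h1 [h2 [h1_bilin [h2_bilin [f_split [h1_antiA [h1_symk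
  [h2_symA [h2_antik h1_gprime]]]]]]]]].
exact: (split_cocycle_Phi_rep f_cocycle h1_bilin h2_bilin f_split h1_antiA h1_symk
  h2_symA h2_antik h1_gprime).
Qed.

End CurrentAlgebra.

Theorem lemma4p1
  (K : fieldType) (two_unit : (2%:R : K) != 0)
  (A : comAlgType K)
  (k : lmodType K) (brk : k -> k -> k) (Hk : is_lie_bracket brk)
  (g : lmodType K) (t : A -> k -> g) (Ht : is_tensor t)
  (brg : g -> g -> g) (Hbrg_bil : is_bilin brg)
  (Hbrg : forall a x b y, brg (t a x) (t b y) = t (a * b) (brk x y))
  (Q : lmodType K) (q : g -> Q) (Hq : is_quotient_map q (gprime t brk)) :
  (* well-defined: f_phi exists, Phi(om,phi) is a 2-cocycle, independent of the lift *)
  (forall phi, Z2_lift brk phi -> exists h, is_fphi t phi h) /\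
  (forall om phi h, alt13 t q om -> Z2_lift brk phi -> is_fphi t phi h ->
     cocycle2 brg (Phi_rep q om h)) /\
  (forall phi phi' h h', Z2_lift brk phi -> Z2_lift brk phi' ->
     (forall a, coboundary2 brk (fun x y => phi a x y - phi' a x y)) ->
     is_fphi t phi h -> is_fphi t phi' h' ->
     coboundary2 brg (fun u v => h u v - h' u v)) /\
  (* linear *)
  (forall (c : K) om1 om2 phi1 phi2 h1 h2 h,
     alt13 t q om1 -> alt13 t q om2 -> Z2_lift brk phi1 -> Z2_lift brk phi2 ->
     is_fphi t phi1 h1 -> is_fphi t phi2 h2 ->
     is_fphi t (fun a x y => c * phi1 a x y + phi2 a x y) h ->
     coboundary2 brg (fun u v =>
       Phi_rep q (fun w z => c * om1 w z + om2 w z) h u v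
       - (c * Phi_rep q om1 h1 u v + Phi_rep q om2 h2 u v))) /\
  (* injective *)
  (forall om phi h, alt13 t q om -> Z2_lift brk phi -> is_fphi t phi h ->
     coboundary2 brg (Phi_rep q om h) ->
     (forall w z, om w z = 0) /\ (forall a, coboundary2 brk (phi a))) /\
  (* image *)
  (forall f, cocycle2 brg f ->
     ((exists om phi h, alt13 t q om /\ Z2_lift brk phi /\ is_fphi t phi h /\
         coboundary2 brg (fun u v => f u v - Phi_rep q om h u v)) <->
      (exists f0, cocycle2 brg f0 /\ f1p1_vanishes t brk f0 /\
         coboundary2 brg (fun u v => f u v - f0 u v)))).
Proof.
have Phi_cocycle := Phi_rep_cocycle two_unit Ht Hbrg_bil Hbrg Hq.
split; first exact: fphi_exists Ht.
split; first exact: Phi_cocycle.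
split; first exact: fphi_lift_coboundary Ht Hbrg_bil Hbrg.
split.
  move=> c om1 om2 phi1 phi2 h1 h2 h _ _ _ _ h1_fphi h2_fphi h_fphi.
  exists (fun _ => 0); split=> [|u v]; first exact: lin_zero.
  by rewrite (Phi_rep_linear q Ht om1 om2 h1_fphi h2_fphi h_fphi) subrr oppr0.
split; first exact: Phi_rep_injective two_unit Ht Hbrg Hq.
move=> f _; split.
  move=> [om [phi [h [om13 [phi_Z2 [h_fphi f_cob]]]]]].
  exists (Phi_rep q om h); split; first exact: Phi_cocycle om13 phi_Z2 h_fphi.
  by split=> //; exact: (Phi_rep_f1p1_vanishes two_unit Ht Hq om13 phi_Z2 h_fphi).
move=> [f0 [f0_cocycle [f0_split [l [l_lin l_cob]]]]].
have [om [phi [h [om13 phi_Z2 h_fphi f0E]]]] :=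
  f1p1_vanishes_Phi_rep two_unit Ht Hbrg Hq f0_cocycle f0_split.
exists om, phi, h; split=> //; split=> //; split=> //.
by exists l; split=> // u v; rewrite -f0E.
Qed.
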